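(* For every binary matrix $P$ such that $Q_1\preccurlyeq P$, where $Q_1\in\{0,1\}^{3\times 3}$ has $\mathrm{supp}(Q_1)=\{(1,2),(2,1),(3,3)\}$, the class $\mathrm{Av}(P)$ is row-unbounded.
   Context: All matrices are binary; rows are numbered top to bottom, columns left to right; $(i,j)$ is the entry in row $i$, column $j$, a 1-entry if it equals 1; $\mathrm{supp}$ is the set of 1-entries. For integers, $(a,b]=\{a+1,\dots,b\}$. A pattern $P\in\{0,1\}^{k\times\ell}$ is an interval minor of $M\in\{0,1\}^{m\times n}$, written $P\preccurlyeq M$, if there are integers $0=r_0<\dots<r_k=m$ and $0=c_0<\dots<c_\ell=n$ such that for each 1-entry $(i,j)$ of $P$ the submatrix of $M$ on rows $(r_{i-1},r_i]$ and columns $(c_{j-1},c_j]$ contains a 1-entry; otherwise $M$ avoids $P$. $\mathrm{Av}(P)$ is the set of binary matrices avoiding $P$. A matrix $M\in\mathcal C$ is critical for $\mathcal C$ if changing any single 0-entry of $M$ into a 1-entry gives a matrix outside $\mathcal C$. A horizontal 0-run is a maximal set of consecutive 0-entries within a single row; the complexity of a row is the number of horizontal 0-runs in it. The row-complexity of $\mathcal C$ is the supremum over matrices critical for $\mathcal C$ of the maximum complexity of a row; $\mathcal C$ is row-unbounded if this supremum is infinite. *)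

(* Binary matrices are 'M[bool]_(m, n); rows/columns are
   0-indexed here (row i of the paper is ordinal i-1). *)
From mathcomp Require Import all_boot all_order all_algebra.
Set Implicit Arguments. Unset Strict Implicit. Unset Printing Implicit Defensive.

(* P (k x l) is an interval minor of M (m x n): there are integers
   0 = r_0 < ... < r_k = m and 0 = c_0 < ... < c_l = n such that for each
   1-entry (i,j) of P (0-indexed), the block of M on rows (r_i, r_{i+1}] and
   columns (c_j, c_{j+1}] (1-indexed), i.e. 0-indexed rows a with
   r_i <= a < r_{i+1} and columns b with c_j <= b < c_{j+1}, contains a 1. *)
Definition interval_minor (k l m n : nat) (P : 'M[bool]_(k, l))
    (M : 'M[bool]_(m, n)) : Prop :=
  exists (r c : nat -> nat),
    [/\ r 0 = 0, r k = m & (forall t, t < k -> r t < r t.+1)] /\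
    [/\ c 0 = 0, c l = n & (forall t, t < l -> c t < c t.+1)] /\
        (forall (i : 'I_k) (j : 'I_l), P i j ->
          exists (a : 'I_m) (b : 'I_n),
            [/\ M a b, r i <= a < r i.+1 & c j <= b < c j.+1]).

Definition mclass := forall m n : nat, 'M[bool]_(m, n) -> Prop.

Definition Av (k l : nat) (P : 'M[bool]_(k, l)) : mclass :=
  fun m n M => ~ interval_minor P M.

Definition set1 (m n : nat) (M : 'M[bool]_(m, n)) (a : 'I_m) (b : 'I_n)
  : 'M[bool]_(m, n) :=
  \matrix_(x, y) (M x y || ((x == a) && (y == b))).

Definition critical (C : mclass) (m n : nat) (M : 'M[bool]_(m, n)) : Prop :=
  C m n M /\ forall (a : 'I_m) (b : 'I_n), M a b = false -> ~ C m n (set1 M a b).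

(* Entry (i, j) is the first entry of a horizontal 0-run: it is 0 and either
   j is the first column or entry (i, j-1) is 1. *)
Definition run_start (m n : nat) (M : 'M[bool]_(m, n)) (i : 'I_m) (j : 'I_n)
  : bool :=
  ~~ M i j && ((val j == 0) || [exists j' : 'I_n, (j'.+1 == val j) && M i j']).

Definition row_complexity (m n : nat) (M : 'M[bool]_(m, n)) (i : 'I_m) : nat :=
  #|[pred j : 'I_n | run_start M i j]|.

(* The supremum over critical matrices of the maximum row complexity is
   infinite. *)
Definition row_unbounded (C : mclass) : Prop :=
  forall K : nat, exists (m n : nat) (M : 'M[bool]_(m, n)) (i : 'I_m),
    critical C M /\ K <= row_complexity M i.

Definition Q1 : 'M[bool]_(3, 3) :=
  \matrix_(i, j) [|| (val i == 0) && (val j == 1),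
                     (val i == 1) && (val j == 0) |
                     (val i == 2) && (val j == 2)].

From Pilot Require Import Defs.
From mathcomp Require Import all_boot all_order all_algebra zify.
From Stdlib Require Import Classical.

Set Implicit Arguments. Unset Strict Implicit. Unset Printing Implicit Defensive.

(* Choose a 1-entry (x, y) of P that is the top entry of a copy of Q1 formed
   by 1-entries of P, with x as large as possible.  The witness matrix has full
   rows above row x; row x is cut into K blocks of width l+1, each ending with
   a single 1; below it, K copies of rows x..k-1 of P, with the entry (x, y)
   erased, sit on the antidiagonal of a K x K grid of (k-x) x (l+1) blocks.
   It avoids P: an embedding of P would send every Q1-top column j of row x
   into one single copy, to a Q1-top column of the first row of that copy (by
   the maximality of x) other than y, strictly increasingly in j, which is
   impossible.  Filling row x at offset y of any column block completes P
   with the copy below that block, so every critical matrix above the witness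
   keeps a 0 there in each of the K blocks, separated by the 1s closing the
   blocks. *)

Lemma mul_add_ltn t K w j : t < K -> j < w -> t * w + j < K * w.
Proof.
move=> tK jw; apply: (@leq_trans (t.+1 * w)); first by rewrite mulSn addnC ltn_add2r.
by rewrite leq_mul2r tK orbT.
Qed.

Lemma ltn_mod_eqdiv a b d : a %/ d = b %/ d -> a < b -> a %% d < b %% d.
Proof.
move=> ab_div ab; move: ab; rewrite {1}(divn_eq a d) {1}(divn_eq b d) ab_div.
by rewrite ltn_add2l.
Qed.

Lemma divn_between a b c d : a <= b <= c -> a %/ d = c %/ d -> b %/ d = a %/ d.
Proof.
case/andP=> ab bc ac_div; apply/eqP.
by rewrite eqn_leq (leq_div2r d ab) andbT ac_div leq_div2r.
Qed.

Section Entries.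
Variables m n : nat.
Implicit Types M N : 'M[bool]_(m, n).

Definition mx_at M (a b : nat) : bool :=
  match (insub a : option 'I_m), (insub b : option 'I_n) with
  | Some a', Some b' => M a' b'
  | _, _ => false
  end.

Lemma mx_atE M (a : 'I_m) (b : 'I_n) : mx_at M a b = M a b.
Proof. by rewrite /mx_at !valK. Qed.

Lemma mx_atP M a b : mx_at M a b ->
  exists (a' : 'I_m) (b' : 'I_n), [/\ a' = a :> nat, b' = b :> nat & M a' b'].
Proof.
rewrite /mx_at; case: insubP => [a' _ <-|//]; case: insubP => [b' _ <-|//] Mab.
by exists a', b'.
Qed.

Lemma mx_at_bounds M a b : mx_at M a b -> a < m /\ b < n.
Proof. by case/mx_atP => a' [b' [<- <- _]]; split. Qed.

Definition mx_sub M N := forall a b, M a b -> N a b.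

Lemma mx_sub_at M N a b : mx_sub M N -> mx_at M a b -> mx_at N a b.
Proof. by move=> MN /mx_atP[a' [b' [<- <- Mab]]]; rewrite mx_atE; apply: MN. Qed.

Lemma mx_sub_set1 M a b : mx_sub M (Defs.set1 M a b).
Proof. by move=> a' b' Mab; rewrite mxE Mab. Qed.

Lemma run_start_at M (i : 'I_m) (j : 'I_n) :
  run_start M i j = ~~ M i j && ((val j == 0) || mx_at M i j.-1).
Proof.
rewrite /run_start; case: (val j =P 0) => //= j_neq0; congr (_ && _).
apply/existsP/idP => [[j' /andP[/eqP <- Mj']]|/mx_atP[i' [j' [/val_inj <- Ej' Mj']]]].
  by rewrite mx_atE.
by exists j'; rewrite Ej' prednK ?eqxx ?lt0n; last exact/eqP.
Qed.

End Entries.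

Lemma critical_extension (C : mclass) m n (M : 'M[bool]_(m, n)) :
  C m n M -> exists M', mx_sub M M' /\ critical C M'.
Proof.
pose zeros (N : 'M[bool]_(m, n)) := #|[set p : 'I_m * 'I_n | ~~ N p.1 p.2]|.
have [z] := ubnP (zeros M); elim: z M => // z IH M; rewrite ltnS => Mz CM.
have [crit|not_crit] := classic (critical C M); first by exists M; split => // ? ?.
have [a [b [Mab CMab]]] : exists a b, M a b = false /\ C m n (Defs.set1 M a b).
  apply: NNPP => none; apply: not_crit; split => // a b Mab CMab.
  by apply: none; exists a, b.
have fewer_zeros : zeros (Defs.set1 M a b) < zeros M.
  apply/proper_card/properP; split.
    by apply/subsetP => p; rewrite !inE; apply: contra; apply: mx_sub_set1.
  by exists (a, b); rewrite !inE ?Mab // negbK mxE !eqxx orbT.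
have [M' [sub crit]] := IH _ (leq_trans fewer_zeros Mz) CMab.
by exists M'; split => // a' b' ?; apply/sub/mx_sub_set1.
Qed.

Lemma run_start_between (f : nat -> bool) L R :
  L <= R -> ~~ f R -> (L = 0) \/ f L.-1 ->
  exists2 j, L <= j <= R & ~~ f j && ((j == 0) || f j.-1).
Proof.
elim: R => [|R IH] LR fR L0.
  by exists 0; rewrite ?LR // fR.
case: (ltngtP L R.+1) LR => // [LR|LR] _; last first.
  by exists R.+1; rewrite ?LR ?leqnn // fR; case: L0; rewrite LR // => -> /=.
case fR': (f R); first by exists R.+1; rewrite ?fR ?fR' // leqnn andbT (ltnW LR).
have [j /andP[Lj jR] fj] := IH LR (negbT fR') L0.
by exists j; rewrite ?fj // Lj (leqW jR).
Qed.

Lemma row_complexity_periodic m n (M : 'M[bool]_(m, n)) (i : 'I_m) (K w y : nat) :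
  y < w -> K * w <= n ->
  (forall t, t < K -> ~~ mx_at M i (t * w + y)) ->
  (forall t, t.+1 < K -> mx_at M i (t * w + w.-1)) ->
  K <= row_complexity M i.
Proof.
move=> yw Kwn zero one.
have start (t : 'I_K) : exists j : 'I_n, (t * w <= j <= t * w + y) && run_start M i j.
  have prev : t * w = 0 \/ mx_at M i (t * w).-1.
    case: t => [[|t] tK] /=; [by left | right].
    have -> : (t.+1 * w).-1 = t * w + w.-1.
      by case: (w) yw => // w' _; rewrite mulSn addnC addnS.
    exact: one.
  have [j /andP[tj jt] rs] := run_start_between (leq_addr y (t * w)) (zero t (ltn_ord t)) prev.
  have jn : j < n by apply: leq_trans Kwn; apply: leq_ltn_trans jt (mul_add_ltn _ _).
  by exists (Ordinal jn); rewrite tj jt run_start_at -[M _ _]mx_atE.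
have [s sP] := fin_all_exists start.
have lt_s (u u' : 'I_K) : u < u' -> s u < s u'.
  move=> uu'; case/andP: (sP u) => /andP[_ su] _; case/andP: (sP u') => /andP[su' _] _.
  exact: leq_ltn_trans su (leq_trans (mul_add_ltn uu' yw) su').
have s_inj : injective s.
  by move=> t t' st; apply/val_inj; case: (ltngtP t t') => // /lt_s; rewrite st ltnn.
rewrite /row_complexity -[K]card_ord -(card_imset _ s_inj); apply: subset_leq_card.
by apply/subsetP => _ /imsetP[t _ ->]; rewrite inE; case/andP: (sP t).
Qed.

Lemma cut_le k (r : nat -> nat) : (forall t, t < k -> r t < r t.+1) ->
  forall i j, i <= j <= k -> r i <= r j.
Proof.
move=> r_incr i; elim=> [|j IH] /andP[ij jk]; first by move: ij; rewrite leqn0 => /eqP ->.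
case: (ltngtP i j.+1) ij => // [ij|->] _ //.
by apply: leq_trans (IH _) (ltnW (r_incr j jk)); rewrite -ltnS ij (ltnW jk).
Qed.

Lemma cut_ge_id k (r : nat -> nat) : r 0 = 0 -> (forall t, t < k -> r t < r t.+1) ->
  forall i, i <= k -> i <= r i.
Proof.
move=> r0 r_incr; elim=> [|i IH] ik //.
by apply: leq_ltn_trans (IH (ltnW ik)) (r_incr i ik).
Qed.

Definition increasing_intervals (k m : nat) (lo hi : nat -> nat) :=
  (forall i, i < k -> lo i <= hi i < m) /\ (forall i, i.+1 < k -> hi i < lo i.+1).

Lemma cut_of_intervals k m lo hi : 0 < k -> increasing_intervals k m lo hi ->
  exists r : nat -> nat,
    [/\ r 0 = 0, r k = m & forall t, t < k -> r t < r t.+1] /\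
    (forall i a, i < k -> lo i <= a <= hi i -> r i <= a < r i.+1).
Proof.
move=> k_gt0 [lohi hilo].
pose r i := if i == 0 then 0 else if i < k then lo i else m.
have r_le_lo i : i < k -> r i <= lo i by move=> ik; rewrite /r ik; case: eqP.
have hi_lt_r i : i < k -> hi i < r i.+1.
  move=> ik; rewrite /r /=; case: (ltnP i.+1 k) => [ik'|_]; first exact: hilo.
  by case/andP: (lohi i ik).
exists r; split; first split.
- by [].
- by rewrite /r ltnn; case: eqP k_gt0 => // ->.
- move=> t tk; apply: leq_ltn_trans (r_le_lo t tk) (leq_ltn_trans _ (hi_lt_r t tk)).
  by case/andP: (lohi t tk).
move=> i a ik /andP[loa ahi].
by rewrite (leq_trans (r_le_lo i ik) loa) (leq_ltn_trans ahi (hi_lt_r i ik)).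
Qed.

Lemma interval_minor_of_boxes k l m n (P : 'M[bool]_(k, l)) (M : 'M[bool]_(m, n))
    (lo hi lo' hi' : nat -> nat) :
  0 < k -> 0 < l -> increasing_intervals k m lo hi -> increasing_intervals l n lo' hi' ->
  (forall (i : 'I_k) (j : 'I_l), P i j ->
     exists a b, [/\ lo i <= a <= hi i, lo' j <= b <= hi' j & mx_at M a b]) ->
  interval_minor P M.
Proof.
move=> k_gt0 l_gt0 /(cut_of_intervals k_gt0)[r [r_cut r_box]].
move=> /(cut_of_intervals l_gt0)[c [c_cut c_box]] boxes.
exists r, c; split=> //; split=> // i j /boxes[a [b [ia jb /mx_atP[a' [b' [Ea Eb Mab]]]]]].
by exists a', b'; rewrite Ea Eb r_box ?c_box.
Qed.

Lemma increasing_map_not_into_setD1 n (C : {set 'I_n}) (z : 'I_n) (g : 'I_n -> 'I_n) :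
  z \in C -> {in C &, forall j j' : 'I_n, j < j' -> g j < g j'} ->
  ~ {in C, forall j, g j \in C :\ z}.
Proof.
move=> zC g_incr g_into.
have g_inj : {in C &, injective g}.
  move=> j j' jC j'C gjj'; apply/val_inj.
  by case: (ltngtP j j') => // [/(g_incr _ _ jC j'C)|/(g_incr _ _ j'C jC)]; rewrite gjj' ltnn.
have : g @: C \subset C :\ z by apply/subsetP => _ /imsetP[j jC ->]; apply: g_into.
by move/subset_leq_card; rewrite card_in_imset // (cardsD1 z C) zC ltnn.
Qed.

Section Q1Tops.
Variables (k l : nat) (P : 'M[bool]_(k, l)).

Definition Q1_top (i j : nat) : bool :=
  mx_at P i j && [exists a2 : 'I_k, exists b2 : 'I_l, exists a3 : 'I_k, exists b3 : 'I_l,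
    [&& i < a2 < a3, b2 < j < b3, P a2 b2 & P a3 b3]].

Lemma Q1_topP i j :
  reflect (exists a2 b2 a3 b3, [/\ mx_at P i j, mx_at P a2 b2, mx_at P a3 b3,
                                   i < a2 < a3 & b2 < j < b3])
          (Q1_top i j).
Proof.
apply: (iffP andP) => [[Pij /existsP[a2 /existsP[b2 /existsP[a3 /existsP[b3]]]]]|].
  by case/and4P=> ia ja P2 P3; exists a2, b2, a3, b3; rewrite !mx_atE.
case=> _ [_ [_ [_ [Pij /mx_atP[a2 [b2 [<- <- P2]]] /mx_atP[a3 [b3 [<- <- P3]]] ia jb]]]].
split=> //; apply/existsP; exists a2; apply/existsP; exists b2.
by apply/existsP; exists a3; apply/existsP; exists b3; rewrite ia jb P2 P3.
Qed.

Lemma Q1_top_bounds i j : Q1_top i j -> i < k /\ j < l.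
Proof. by case/andP => /mx_at_bounds. Qed.

Lemma Q1_top_of_minor : interval_minor Q1 P -> exists i j, Q1_top i j.
Proof.
case=> r [c [_ [_ embed]]].
have q12 : Q1 (@Ordinal 3 0 isT) (@Ordinal 3 1 isT) by rewrite mxE.
have q21 : Q1 (@Ordinal 3 1 isT) (@Ordinal 3 0 isT) by rewrite mxE.
have q33 : Q1 (@Ordinal 3 2 isT) (@Ordinal 3 2 isT) by rewrite mxE.
have [a1 [b1 [P1 /andP[_ a1r] /andP[cb1 b1c]]]] := embed _ _ q12.
have [a2 [b2 [P2 /andP[ra2 a2r] /andP[_ b2c]]]] := embed _ _ q21.
have [a3 [b3 [P3 /andP[ra3 _] /andP[cb3 _]]]] := embed _ _ q33.
exists a1, b1; apply/Q1_topP; exists a2, b2, a3, b3; rewrite !mx_atE.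
by split=> //; move: a1r ra2 a2r ra3 cb1 b1c b2c cb3 => /=; lia.
Qed.

Lemma exists_lowest_Q1_top : (exists i j, Q1_top i j) ->
  exists x y, Q1_top x y /\ forall i j, Q1_top i j -> i <= x.
Proof.
move=> top_ex; pose row_has_top i := [exists j : 'I_l, Q1_top i j].
have top_row i j : Q1_top i j -> row_has_top i.
  by move=> top; apply/existsP; exists (Ordinal (Q1_top_bounds top).2).
have row_ex : exists i, row_has_top i by case: top_ex => i [j /top_row]; exists i.
have row_bound i : row_has_top i -> i <= k by case/existsP=> j /Q1_top_bounds[/ltnW].
have [x /existsP[y top] lowest] := ex_maxnP row_ex row_bound.
by exists x, y; split=> // i j /top_row/lowest.
Qed.

End Q1Tops.

Section Gadget.
Variables (k l : nat) (P : 'M[bool]_(k, l)) (x y K : nat).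

Local Notation blk_row a := ((a - x.+1) %/ (k - x)).
Local Notation off_row a := ((a - x.+1) %% (k - x)).
Local Notation blk_col b := (b %/ l.+1).
Local Notation off_col b := (b %% l.+1).

Definition gadget_entry (a b : nat) : bool :=
  if a < x then true
  else if a == x then off_col b == l
  else [&& blk_col b + blk_row a == K.-1, mx_at P (x + off_row a) (off_col b)
         & (off_row a != 0) || (off_col b != y)].

Definition gadget_rows := x.+1 + K * (k - x).
Definition gadget_cols := K * l.+1.

Definition gadget : 'M[bool]_(gadget_rows, gadget_cols) :=
  \matrix_(a, b) gadget_entry a b.

Lemma mx_at_gadget a b : a < gadget_rows -> b < gadget_cols ->
  mx_at gadget a b = gadget_entry a b.
Proof.
by move=> ar bc; rewrite -[a]/(val (Ordinal ar)) -[b]/(val (Ordinal bc)) mx_atE mxE.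
Qed.

Lemma gadget_entry_sep b : gadget_entry x b = (off_col b == l).
Proof. by rewrite /gadget_entry ltnn eqxx. Qed.

Lemma gadget_entry_low a b : x < a -> gadget_entry a b =
  [&& blk_col b + blk_row a == K.-1, mx_at P (x + off_row a) (off_col b)
    & (off_row a != 0) || (off_col b != y)].
Proof. by move=> xa; rewrite /gadget_entry ltnNge (ltnW xa) /= gtn_eqF. Qed.

Lemma gadget_entry_block u t s j : s < k - x -> j < l.+1 ->
  gadget_entry (x.+1 + u * (k - x) + s) (t * l.+1 + j) =
  [&& t + u == K.-1, mx_at P (x + s) j & (s != 0) || (j != y)].
Proof.
move=> sh jw; rewrite gadget_entry_low; last by rewrite -addnA; apply: leq_addr.
have h_gt0 : 0 < k - x := leq_ltn_trans (leq0n s) sh.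
by rewrite -addnA addKn !divnMDl // !divn_small // !modnMDl !modn_small // !addn0.
Qed.

Lemma gadget_low_block a2 a3 b2 b3 : x < a2 -> a2 < a3 -> b2 < b3 ->
  gadget_entry a2 b2 -> gadget_entry a3 b3 ->
  blk_row a2 = blk_row a3 /\ blk_col b2 = blk_col b3.
Proof.
move=> xa2 a23 b23; have xa3 := ltn_trans xa2 a23; rewrite !gadget_entry_low //.
move=> /and3P[/eqP E2 _ _] /and3P[/eqP E3 _ _].
have rows : blk_row a2 <= blk_row a3 by apply/leq_div2r/leq_sub2r/ltnW.
have cols : blk_col b2 <= blk_col b3 by apply/leq_div2r/ltnW.
move: rows cols E2 E3; move: (blk_row a2) (blk_row a3) (blk_col b2) (blk_col b3).
lia.
Qed.

Hypothesis lowest : forall i j, Q1_top P i j -> i <= x.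

Lemma gadget_213 a1 a2 a3 b1 b2 b3 :
  x <= a1 -> a1 < a2 -> a2 < a3 -> b2 < b1 -> b1 < b3 ->
  gadget_entry a1 b1 -> gadget_entry a2 b2 -> gadget_entry a3 b3 ->
  [/\ blk_row a1 = blk_row a2, blk_col b1 + blk_row a1 = K.-1,
      Q1_top P x (off_col b1) & off_col b1 != y].
Proof.
move=> xa1 a12 a23 b21 b13 e1 e2 e3.
have xa2 : x < a2 := leq_ltn_trans xa1 a12.
have xa3 : x < a3 := ltn_trans xa2 a23.
have [row23 col23] := gadget_low_block xa2 a23 (ltn_trans b21 b13) e2 e3.
have col12 : blk_col b1 = blk_col b2 by apply: (divn_between _ col23); rewrite (ltnW b21) (ltnW b13).
have j21 : off_col b2 < off_col b1 by apply: ltn_mod_eqdiv.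
have j13 : off_col b1 < off_col b3 by apply: ltn_mod_eqdiv; rewrite ?col12.
move: e2 e3; rewrite !gadget_entry_low // => /and3P[/eqP E2 P2 _] /and3P[_ P3 _].
have [_ j3l] := mx_at_bounds P3.
have xa1' : x < a1.
  rewrite ltn_neqAle xa1 andbT; apply: contraTneq e1 => <-.
  by rewrite gadget_entry_sep neq_ltn (ltn_trans j13 j3l).
move: e1; rewrite gadget_entry_low // => /and3P[/eqP E1 P1 kept1].
have row12 : blk_row a1 = blk_row a2 by apply/(@addnI (blk_col b1)); rewrite E1 col12 E2.
have s12 : off_row a1 < off_row a2 by apply: ltn_mod_eqdiv; rewrite // ltn_sub2rE.
have s23 : off_row a2 < off_row a3 by apply: ltn_mod_eqdiv; rewrite // ltn_sub2rE.
have top1 : Q1_top P (x + off_row a1) (off_col b1).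
  apply/Q1_topP; exists (x + off_row a2), (off_col b2), (x + off_row a3), (off_col b3).
  by split; rewrite // ?ltn_add2l ?s12 ?s23 ?j21 ?j13.
have s1 : off_row a1 = 0.
  by apply/eqP; rewrite -leqn0 -(leq_add2l x) addn0; apply: lowest top1.
by rewrite s1 addn0 eqxx /= in top1 kept1; split.
Qed.

Section Embedding.
Variables r c : nat -> nat.
Hypotheses (r0 : r 0 = 0) (r_incr : forall t, t < k -> r t < r t.+1).
Hypothesis c_incr : forall t, t < l -> c t < c t.+1.
Hypothesis embed : forall (i : 'I_k) (j : 'I_l), P i j ->
  exists (a : 'I_gadget_rows) (b : 'I_gadget_cols),
    [/\ gadget a b, r i <= a < r i.+1 & c j <= b < c j.+1].

Lemma Q1_top_image j : Q1_top P x j ->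
  exists a1 b1, [/\ a1 < r x.+1, c j <= b1 < c j.+1,
    forall a, a < r x.+1 -> blk_row a <= blk_row a1,
    blk_col b1 + blk_row a1 = K.-1 & Q1_top P x (off_col b1) && (off_col b1 != y)].
Proof.
case/Q1_topP=> _ [_ [_ [_ [/mx_atP[i1 [j1 [Ei1 <- P1]]]
  /mx_atP[i2 [j2 [<- <- P2]]] /mx_atP[i3 [j3 [<- <- P3]]] /andP[i12 i23] /andP[j21 j13]]]]].
have [a1 [b1 [e1 /andP[ra1 a1r] /andP[cb1 b1c]]]] := embed P1.
have [a2 [b2 [e2 /andP[ra2 a2r] /andP[_ b2c]]]] := embed P2.
have [a3 [b3 [e3 /andP[ra3 _] /andP[cb3 _]]]] := embed P3.
rewrite !mxE in e1 e2 e3; rewrite Ei1 in i12 ra1 a1r.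
have r_le := cut_le r_incr; have c_le := cut_le c_incr.
have r12 : r x.+1 <= r i2 by apply: r_le; rewrite i12 (ltnW (ltn_ord i2)).
have r23 : r i2.+1 <= r i3 by apply: r_le; rewrite i23 (ltnW (ltn_ord i3)).
have c21 : c j2.+1 <= c j1 by apply: c_le; rewrite j21 (ltnW (ltn_ord j1)).
have c13 : c j1.+1 <= c j3 by apply: c_le; rewrite j13 (ltnW (ltn_ord j3)).
have xa1 : x <= a1.
  apply: leq_trans ra1; apply: (cut_ge_id r0 r_incr); rewrite -Ei1; exact: ltnW.
have [] := gadget_213 xa1 (leq_trans a1r (leq_trans r12 ra2)) (leq_trans a2r (leq_trans r23 ra3))
  (leq_trans b2c (leq_trans c21 cb1)) (leq_trans b1c (leq_trans c13 cb3)) e1 e2 e3.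
move=> row12 sum1 top1 kept1; exists a1, b1; split; rewrite ?cb1 ?top1 //.
by move=> a ar; rewrite row12; apply/leq_div2r/leq_sub2r/(leq_trans (ltnW ar))/(leq_trans r12).
Qed.

End Embedding.

Hypothesis top : Q1_top P x y.

Lemma gadget_avoids : ~ interval_minor P gadget.
Proof.
case=> r [c [[r0 _ r_incr] [[_ _ c_incr] embed]]].
pose C := [set j : 'I_l | Q1_top P x j].
have image (j : 'I_l) : exists p : nat * nat, j \in C -> [/\ p.1 < r x.+1,
    c j <= p.2 < c j.+1, forall a, a < r x.+1 -> blk_row a <= blk_row p.1,
    blk_col p.2 + blk_row p.1 = K.-1 & Q1_top P x (off_col p.2) && (off_col p.2 != y)].
  case: (boolP (j \in C)) => [|_]; last by exists (0, 0).
  by rewrite inE => /(Q1_top_image r0 r_incr c_incr embed)[a1 [b1 ?]]; exists (a1, b1).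
have [F FP] := fin_all_exists image.
have row_const : {in C &, forall j j', blk_row (F j).1 = blk_row (F j').1}.
  move=> j j' jC j'C; have [a1r _ dom _ _] := FP j jC; have [a1r' _ dom' _ _] := FP j' j'C.
  by apply/eqP; rewrite eqn_leq dom' ?dom.
have col_const : {in C &, forall j j', blk_col (F j).2 = blk_col (F j').2}.
  move=> j j' jC j'C; have [_ _ _ sum _] := FP j jC; have [_ _ _ sum' _] := FP j' j'C.
  by apply/(@addIn (blk_row (F j).1)); rewrite sum (row_const j j') ?sum'.
have [_ yl] := Q1_top_bounds top.
pose g j := insubd (Ordinal yl) (off_col (F j).2).
have gE : {in C, forall j, g j = off_col (F j).2 :> nat}.
  move=> j jC; have [_ _ _ _ /andP[/Q1_top_bounds[_ jl] _]] := FP j jC.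
  by rewrite val_insubd jl.
apply: (@increasing_map_not_into_setD1 _ C (Ordinal yl) g); first by rewrite inE.
  move=> j j' jC j'C jj'; rewrite !gE //; apply: ltn_mod_eqdiv; first exact: col_const.
  have [_ /andP[_ bj] _ _ _] := FP j jC; have [_ /andP[bj' _] _ _ _] := FP j' j'C.
  have cjj' : c j.+1 <= c j' by apply: (cut_le c_incr); rewrite jj' (ltnW (ltn_ord j')).
  exact: leq_trans bj (leq_trans cjj' bj').
move=> j jC; have [_ _ _ _ /andP[topj newj]] := FP j jC.
by rewrite !inE -val_eqE /= gE // newj.
Qed.

Lemma x_lt_gadget_rows : x < gadget_rows.
Proof. by rewrite /gadget_rows ltnS leq_addr. Qed.

Lemma gadget_separator t : t < K -> mx_at gadget x (t * l.+1 + l).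
Proof.
move=> tK; rewrite mx_at_gadget ?x_lt_gadget_rows ?gadget_entry_sep ?modnMDl ?modn_small //.
exact: mul_add_ltn tK (ltnSn l).
Qed.

Lemma gadget_rows_block u i : x < k -> u < K -> i < k ->
  x.+1 + u * (k - x) + (i - x) < gadget_rows.
Proof.
move=> xk uK ik; rewrite /gadget_rows -addnA ltn_add2l.
by apply: mul_add_ltn uK _; lia.
Qed.

Lemma gadget_completion t (M : 'M[bool]_(gadget_rows, gadget_cols)) :
  t < K -> mx_sub gadget M -> mx_at M x (t * l.+1 + y) -> interval_minor P M.
Proof.
move=> tK gM Mxy; have [xk yl] := Q1_top_bounds top.
move uE : (K.-1 - t) => u; move a0E : (x.+1 + u * (k - x)) => a0.
have a0_low i : i < k -> a0 + (i - x) < gadget_rows.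
  by rewrite -a0E; apply: gadget_rows_block => //; lia.
have x_a0 : x < a0 by rewrite -a0E; apply: leq_addr.
have gM_at a b : a < gadget_rows -> b < gadget_cols -> gadget_entry a b -> mx_at M a b.
  by move=> ar bc; rewrite -mx_at_gadget //; apply: mx_sub_at.
have col_lt (j : 'I_l) : t * l.+1 + j < gadget_cols.
  by apply: (mul_add_ltn tK); rewrite ltnS (ltnW (ltn_ord j)).
apply: (interval_minor_of_boxes (lo := fun i => if i <= x then i else a0 + (i - x))
  (hi := fun i => if i < x then i else a0 + (i - x))
  (lo' := fun j => t * l.+1 + j) (hi' := fun j => t * l.+1 + j)).
- exact: leq_ltn_trans (leq0n x) xk.
- exact: leq_ltn_trans (leq0n y) yl.
- split=> i ik /=.
    by move: (a0_low i ik); case: (leqP i x); case: (ltnP i x) => *; lia.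
  by case: (ltnP i x) => *; lia.
- split=> j jl /=; first by rewrite leqnn (col_lt (Ordinal jl)).
  by rewrite ltn_add2l.
move=> i j Pij /=.
case: (ltnP i x) => [ix|xi].
  exists i, (t * l.+1 + j); rewrite (ltnW ix); split; rewrite ?leqnn //.
  by apply: gM_at; [apply: ltn_trans ix x_lt_gadget_rows | | rewrite /gadget_entry ix].
case: (boolP ((i == x :> nat) && (j == y :> nat))) => [/andP[/eqP ix /eqP jy]|ne].
  exists x, (t * l.+1 + y); rewrite ix jy leqnn subnn addn0 (ltnW x_a0).
  by split; rewrite ?leqnn.
exists (a0 + (i - x)), (t * l.+1 + j); split.
- by case: (leqP i x); case: (ltnP i x) => *; lia.
- by rewrite leqnn.
have ixh : i - x < k - x by have := ltn_ord i; lia.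
apply: gM_at; rewrite ?a0_low ?col_lt // -a0E gadget_entry_block ?ltnS ?(ltnW (ltn_ord j)) //.
rewrite subnKC // mx_atE Pij -uE subnKC ?eqxx /=; last lia.
rewrite subn_eq0; apply: contraNT ne; rewrite negb_or !negbK => /andP[ix /eqP ->].
by rewrite eqxx andbT eqn_leq ix xi.
Qed.

End Gadget.

Theorem theorem3p4 (k l : nat) (P : 'M[bool]_(k, l)) :
  interval_minor Q1 P -> row_unbounded (Av P).
Proof.
move=> /Q1_top_of_minor/exists_lowest_Q1_top[x [y [top lowest]]] K.
have [M [gM critM]] := critical_extension (C := Av P) (gadget_avoids (K := K) lowest top).
exists _, _, M, (Ordinal (x_lt_gadget_rows k x K)); split=> //.
have [_ yl] := Q1_top_bounds top.
apply: (row_complexity_periodic (ltnW yl : y < l.+1)) => // t tK /=.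
- by apply/negP => /(gadget_completion top tK gM); case: critM.
- exact/(mx_sub_at gM)/gadget_separator/ltnW.
Qed.
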